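(* Let $\mathcal{A}=\{\alpha_1<\dots<\alpha_m\}\subset(0,1)$ and $d_{\mathcal{A}}=\min_{\alpha\in\mathcal{A}}\min(\alpha,1-\alpha)$. Suppose $|y_t-b_t^{\alpha}|\le R$ for all $\alpha\in\mathcal{A}$ and all $t$, for some $R>0$. Then for each $t$ the MultiQT loss $\ell_t(\theta)=\sum_{\alpha\in\mathcal{A}}\rho_\alpha(b_t^{\alpha}+\theta^{\alpha},y_t)$ is $(h,\phi(h))$-restorative for any $h\ge\frac{R|\mathcal{A}|^{3/2}}{d_{\mathcal{A}}}$, where $\phi(h)=\frac{h\,d_{\mathcal{A}}}{\sqrt{|\mathcal{A}|}}-R|\mathcal{A}|$ (a constant function).
   Context: Quantile loss $\rho_\alpha(\hat y,y)=\alpha|y-\hat y|$ if $y-\hat y\ge0$ and $(1-\alpha)|y-\hat y|$ otherwise. $b_t\in\mathbb{R}^m$ are base forecasts, $y_t\in\mathbb{R}$ outcomes. A loss $\ell$ is $(h,\phi)$-restorative ($h\ge0$, $\phi\ge0$) if all its subgradients $g$ satisfy $\langle\theta,g(\theta)\rangle\ge\phi(\theta)$ whenever $\|\theta\|_2>h$. *)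

From mathcomp Require Import all_boot all_order all_algebra.
From mathcomp Require Import reals.
Set Implicit Arguments. Unset Strict Implicit. Unset Printing Implicit Defensive.
Import Order.TTheory GRing.Theory Num.Theory.
Local Open Scope ring_scope.

Definition qloss {R : realType} (a yhat y : R) : R :=
  if 0 <= y - yhat then a * `|y - yhat| else (1 - a) * `|y - yhat|.

Definition dotv {R : realType} {m : nat} (u v : 'I_m -> R) : R :=
  \sum_(i < m) u i * v i.

Definition norm2 {R : realType} {m : nat} (u : 'I_m -> R) : R :=
  Num.sqrt (\sum_(i < m) u i ^+ 2).

Definition is_subgradient {R : realType} {m : nat}
  (l : ('I_m -> R) -> R) (theta g : 'I_m -> R) : Prop :=
  forall theta' : 'I_m -> R,
    l theta + dotv g (fun i => theta' i - theta i) <= l theta'.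

Definition restorative {R : realType} {m : nat}
  (l : ('I_m -> R) -> R) (h : R) (phi : ('I_m -> R) -> R) : Prop :=
  forall theta g : 'I_m -> R,
    h < norm2 theta -> is_subgradient l theta g -> phi theta <= dotv theta g.

Definition dA {R : realType} {m : nat} (alpha : 'I_m -> R) : R :=
  \big[Num.min/1]_(i < m) Num.min (alpha i) (1 - alpha i).

Definition multiqt_loss {R : realType} {m : nat} (alpha : 'I_m -> R)
  (b : 'I_m -> R) (y : R) (theta : 'I_m -> R) : R :=
  \sum_(i < m) qloss (alpha i) (b i + theta i) y.

From mathcomp Require Import all_boot all_order all_algebra.
From mathcomp Require Import reals.
From mathcomp Require Import ring lra.
Import Order.TTheory GRing.Theory Num.Theory.
Local Open Scope ring_scope.

(* Testing a subgradient g of the loss at theta against the origin gives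
   <theta, g> >= l(theta) - l(0).  Each quantile loss grows at slope at least
   d_A away from its kink and is at most |y - b_i| at the origin, so
   l(theta) - l(0) >= d_A |theta|_1 - R |A|, and |theta|_1 >= |theta|_2 > h.
   This even gives the bound h d_A - R |A|; the lower bound on h is only used
   to know that h >= 0. *)

Section QuantileLoss.
Context {R : realType}.
Implicit Types a d yhat y : R.

Lemma qloss_ge_dist a d yhat y : d <= a -> d <= 1 - a ->
  d * `|y - yhat| <= qloss a yhat y.
Proof. by move=> da da'; rewrite /qloss; case: ifP => _; rewrite ler_wpM2r. Qed.

Lemma qloss_le_dist a d yhat y : d <= a -> d <= 1 - a ->
  qloss a yhat y <= (1 - d) * `|y - yhat|.
Proof. by move=> da da'; rewrite /qloss; case: ifP => _; rewrite ler_wpM2r //; lra. Qed.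

Lemma qloss_shift_ge a d b x y : 0 <= d -> d <= a -> d <= 1 - a ->
  d * `|x| - `|y - b| <= qloss a (b + x) y - qloss a b y.
Proof.
move=> d0 da da'.
have tri : `|x| <= `|y - (b + x)| + `|y - b|.
  have := ler_normB (y - b) (y - (b + x)).
  have -> : y - b - (y - (b + x)) = x by ring.
  by rewrite addrC.
have := qloss_ge_dist _ _ (b + x) y da da'.
have := qloss_le_dist _ _ b y da da'.
have := ler_wpM2l d0 tri.
rewrite mulrDr; lra.
Qed.

End QuantileLoss.

Section Vectors.
Context {R : realType} {m : nat}.
Implicit Types (u theta g : 'I_m -> R) (l : ('I_m -> R) -> R).

Lemma subgradient_dotv_ge l theta g : is_subgradient l theta g ->
  l theta - l (fun=> 0) <= dotv theta g.
Proof.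
move=> /(_ (fun=> 0)); rewrite /dotv.
under eq_bigr do rewrite sub0r mulrN mulrC.
by rewrite sumrN; lra.
Qed.

Lemma norm2_le_sum_norm u : norm2 u <= \sum_(i < m) `|u i|.
Proof.
have S0 : 0 <= \sum_(i < m) `|u i| by apply: sumr_ge0.
rewrite /norm2 -(ger0_norm S0) -sqrtr_sqr ler_sqrt ?sqr_ge0 //.
rewrite expr2 mulr_suml; apply: ler_sum => i _.
rewrite -real_normK ?num_real // expr2 ler_wpM2l //.
by rewrite (bigD1 i) //= lerDl sumr_ge0.
Qed.

End Vectors.

Section MultiQT.
Context {R : realType} {m : nat} {alpha b : 'I_m -> R} {y Rad : R}.
Hypothesis alpha01 : forall i, 0 < alpha i < 1.
Hypothesis dist_yb : forall i, `|y - b i| <= Rad.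

Lemma dA_le i : dA alpha <= alpha i /\ dA alpha <= 1 - alpha i.
Proof. by apply/andP; rewrite -le_min; apply: bigmin_le. Qed.

Lemma dA_gt0 : 0 < dA alpha.
Proof.
apply: lt_bigmin => // i _; have /andP[a0 a1] := alpha01 i.
by rewrite lt_min a0 subr_gt0.
Qed.

Lemma multiqt_loss_gap_ge (theta : 'I_m -> R) :
  dA alpha * \sum_(i < m) `|theta i| - Rad * m%:R <=
    multiqt_loss alpha b y theta - multiqt_loss alpha b y (fun=> 0).
Proof.
have [d0 d_le] := (ltW dA_gt0, dA_le).
rewrite /multiqt_loss -sumrB.
under [X in _ <= X]eq_bigr do rewrite addr0.
apply: le_trans _ (ler_sum _ (fun i _ =>
  qloss_shift_ge _ _ (b i) (theta i) y d0 (d_le i).1 (d_le i).2)).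
rewrite sumrB -mulr_sumr lerD2l lerN2.
apply: le_trans (ler_sum _ (fun i _ => dist_yb i)) _.
by rewrite sumr_const card_ord mulr_natr.
Qed.

Lemma multiqt_subgradient_dotv_ge {theta g : 'I_m -> R} :
  is_subgradient (multiqt_loss alpha b y) theta g ->
  dA alpha * norm2 theta - Rad * m%:R <= dotv theta g.
Proof.
move/subgradient_dotv_ge => gap.
apply: le_trans _ (le_trans (multiqt_loss_gap_ge theta) gap).
by rewrite lerD2r ler_wpM2l ?norm2_le_sum_norm ?ltW ?dA_gt0.
Qed.

End MultiQT.

Theorem lemma1 (R : realType) (m : nat) (alpha : 'I_m -> R)
  (b : nat -> 'I_m -> R) (y : nat -> R) (Rad : R) :
  (0 < m)%N ->
  (forall i j : 'I_m, (i < j)%N -> alpha i < alpha j) ->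
  (forall i : 'I_m, 0 < alpha i < 1) ->
  0 < Rad ->
  (forall (t : nat) (i : 'I_m), `|y t - b t i| <= Rad) ->
  forall (t : nat) (h : R),
    Rad * (m%:R * Num.sqrt m%:R) / dA alpha <= h ->
    restorative (multiqt_loss alpha (b t) (y t)) h
      (fun _ => h * dA alpha / Num.sqrt m%:R - Rad * m%:R).
Proof.
move=> m_gt0 _ alpha01 Rad_gt0 dist_yb t h h_ge theta g h_lt g_sub.
have d_gt0 := dA_gt0 alpha01.
have sqrt_ge1 : 1 <= Num.sqrt m%:R :> R.
  by rewrite -[leLHS]sqrtr1 ler_sqrt ?ler1n.
have sqrt_gt0 : 0 < Num.sqrt m%:R :> R := lt_le_trans ltr01 sqrt_ge1.
have h_ge0 : 0 <= h.
  apply: le_trans _ h_ge; apply: divr_ge0 (ltW d_gt0).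
  exact: mulr_ge0 (ltW Rad_gt0) (mulr_ge0 (ler0n _ _) (sqrtr_ge0 _)).
apply: le_trans _ (multiqt_subgradient_dotv_ge alpha01 (dist_yb t) g_sub).
rewrite lerD2r; apply: (@le_trans _ _ (h * dA alpha)).
  have hd_ge0 : 0 <= h * dA alpha := mulr_ge0 h_ge0 (ltW d_gt0).
  by rewrite ler_pdivrMr // ler_peMr.
by rewrite mulrC ler_wpM2l ?ltW.
Qed.
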